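(* For every $\bar y\in\mathcal P$ there exists a feasible assignment for $\bar y$, and if $\bar x$ is an optimal assignment w.r.t. $\bar y$ and $w'$, then $\mathrm{cost}_{w'}(\bar x,\bar y)\le T(\bar y)$.
   Context: Setting: $p\ge1$; a finite metric $d$ on $P\cup\mathcal F$; $f\ge0$; $w:P\to\mathbb{R}_{\ge0}$; matroid $\mathcal M$ on $\mathcal F$ with rank $r$. For demands $\omega$, $\mathrm{cost}_\omega(x,y)=\sum_u f(u)y_u+\sum_{v,u}\omega(v)d(v,u)^px_{vu}$; $\textsc{FacilityMatLP}(\omega,\mathcal M)$ minimizes it s.t. $\sum_u x_{vu}\ge1$, $\sum_{u\in S}y_u\le r(S)$ ($S\subseteq\mathcal F$), $0\le x_{vu}\le y_u$. Given $\bar y$, a feasible assignment is $x$ with $\sum_u x_{vu}\ge1$ and $0\le x_{vu}\le\bar y_u$; an optimal assignment minimizes $\sum_{v,u}\omega(v)d(v,u)^px_{vu}$ among these. $(x,y)$ is an optimal LP solution for $w$ with $\sum_u x_{vu}=1$; $\mathcal R(v)=(\sum_ud(v,u)^px_{vu})^{1/p}$. Client consolidation gives $w'$ (order clients by non-decreasing $\mathcal R$; for $i<j$, if $d(v_i,v_j)\le2^{(p+1)/p}\mathcal R(v_j)$ and $w'(v_i)>0$, move all of $w'(v_j)$ to $v_i$); $P'=\mathrm{supp}(w')$, $|P'|\ge2$. For $v\in P'$: $F(v)$ = facilities whose nearest client in $P'$ is $v$ (ties arbitrary, a partition of $\mathcal F$); $F'(v)=\{u\in F(v):d(u,v)\le2^{1/p}\mathcal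 R(v)\}$; $\gamma_v=\min_{u\notin F(v)}d(v,u)$; $G(v)=\{u\in F(v):d(v,u)\le\gamma_v\}$. $T(\bar y)=\sum_uf(u)\bar y_u+\sum_{v\in P'}w'(v)\big(\sum_{u\in G(v)}d(v,u)^p\bar y_u+3^p\gamma_v^p(1-\sum_{u\in G(v)}\bar y_u)\big)$. $\mathcal P=\{\bar y\in\mathbb{R}^{\mathcal F}_{\ge0}:\sum_{u\in S}\bar y_u\le r(S)\ \forall S\subseteq\mathcal F;\ \sum_{u\in F'(v)}\bar y_u\ge1/2\text{ and }\sum_{u\in G(v)}\bar y_u\le1\ \forall v\in P'\}$. *)

From HB Require Import structures.
From mathcomp Require Import all_boot all_order all_algebra.
From mathcomp Require Import reals exp.
Set Implicit Arguments. Unset Strict Implicit. Unset Printing Implicit Defensive.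
Import Order.TTheory GRing.Theory Num.Theory.
Local Open Scope ring_scope.

Section Defs.
Variables (R : realType) (X : finType).

Definition is_metric (d : X -> X -> R) : Prop :=
  [/\ forall a, d a a = 0,
      forall a b, d a b = 0 -> a = b,
      forall a b, d a b = d b a
    & forall a b c, d a c <= d a b + d b c].

Definition matroid (F : {set X}) (indep : {set X} -> bool) : Prop :=
  [/\ indep set0,
      forall A : {set X}, indep A -> A \subset F,
      forall A B : {set X}, B \subset A -> indep A -> indep B
    & forall A B : {set X}, indep A -> indep B -> (#|A| < #|B|)%N ->
        exists2 x, x \in B :\: A & indep (x |: A)].

Definition rank (indep : {set X} -> bool) (S : {set X}) : nat :=
  \max_(I : {set X} | indep I && (I \subset S)) #|I|.

Definition cost (p : R) (d : X -> X -> R) (P F : {set X}) (f : X -> R)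
  (om : X -> R) (x : X -> X -> R) (y : X -> R) : R :=
  \sum_(u in F) f u * y u +
  \sum_(v in P) \sum_(u in F) om v * (d v u `^ p) * x v u.

Definition conn_cost (p : R) (d : X -> X -> R) (P F : {set X})
  (om : X -> R) (x : X -> X -> R) : R :=
  \sum_(v in P) \sum_(u in F) om v * (d v u `^ p) * x v u.

Definition lp_feasible (P F : {set X}) (indep : {set X} -> bool)
  (x : X -> X -> R) (y : X -> R) : Prop :=
  [/\ forall v, v \in P -> 1 <= \sum_(u in F) x v u,
      forall S : {set X}, S \subset F -> \sum_(u in S) y u <= (rank indep S)%:R
    & forall v u, v \in P -> u \in F -> 0 <= x v u /\ x v u <= y u].

Definition lp_optimal p d P F f indep (om : X -> R) x y : Prop :=
  lp_feasible P F indep x y /\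
  forall x' y', lp_feasible P F indep x' y' ->
    cost p d P F f om x y <= cost p d P F f om x' y'.

Definition feasible_assignment (P F : {set X}) (yb : X -> R) (x : X -> X -> R) : Prop :=
  (forall v, v \in P -> 1 <= \sum_(u in F) x v u) /\
  (forall v u, v \in P -> u \in F -> 0 <= x v u /\ x v u <= yb u).

Definition optimal_assignment p d (P F : {set X}) (om : X -> R) (yb : X -> R)
  (x : X -> X -> R) : Prop :=
  feasible_assignment P F yb x /\
  forall x', feasible_assignment P F yb x' ->
    conn_cost p d P F om x <= conn_cost p d P F om x'.

Definition Rad p d (F : {set X}) (x : X -> X -> R) (v : X) : R :=
  (\sum_(u in F) (d v u `^ p) * x v u) `^ (p^-1).

Definition move_weight (w : X -> R) (a b : X) : X -> R :=
  fun z => if z == a then 0 else if z == b then w b + w a else w z.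

(* Client consolidation, run along an ordering of the clients.
   consol_run thr pre rest w w' : having processed the clients of [pre]
   (in order), with current weights [w], processing [rest] in order yields
   [w']. *)
Inductive consol_run (d : X -> X -> R) (thr : X -> R) :
    seq X -> seq X -> (X -> R) -> (X -> R) -> Prop :=
  | consol_done pre w : consol_run d thr pre [::] w w
  | consol_move pre v rest w i w' :
      i \in pre -> d i v <= thr v -> 0 < w i ->
      consol_run d thr (rcons pre v) rest (move_weight w v i) w' ->
      consol_run d thr pre (v :: rest) w w'
  | consol_stay pre v rest w w' :
      (forall i, i \in pre -> d i v <= thr v -> w i <= 0) ->
      consol_run d thr (rcons pre v) rest w w' ->
      consol_run d thr pre (v :: rest) w w'.

Definition consolidation p d (P F : {set X}) (x : X -> X -> R) (w w' : X -> R) : Prop :=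
  exists s : seq X,
    [/\ uniq s, [set v in s] = P,
        sorted (fun a b => Rad p d F x a <= Rad p d F x b) s
      & consol_run d (fun v => 2 `^ ((p + 1) / p) * Rad p d F x v) [::] s w w'].

(* minimum of g over A (0 if A is empty; never used in that case) *)
Definition setmin (A : {set X}) (g : X -> R) : R :=
  match enum A with
  | [::] => 0
  | a :: s => foldr (fun u m => Num.min (g u) m) (g a) s
  end.

End Defs.

From HB Require Import structures.
From mathcomp Require Import all_boot all_order all_algebra.
From mathcomp Require Import reals exp.
From mathcomp Require Import boolp lra.
Import Order.TTheory GRing.Theory Num.Theory.
Local Open Scope ring_scope.

(* Consolidation leaves the clients [P'] of positive demand pairwise
   far apart: [d a b > 2^((p+1)/p) max(R a, R b)].  Each facility lies in
   the cell of its nearest client of [P'].  For [v] in [P'], let [u*] be a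
   facility outside the cell of [v] at distance [gam v] and [v'] the client
   owning [u*]; then [d v v' <= 2 gam v], so separation puts both cores
   ([F'(v)], [F'(v')]) well inside [gam v].  Hence [F'(v)] is contained in
   [G(v)], and [F'(v')] is disjoint from [G(v)] and within [3 gam v] of [v].
   A unit row for [v] uses all of [yb] on [G(v)] and tops up proportionally
   from [F'(v')], whose mass is at least 1/2; this costs at most the [v]-term
   of [T].  Copying these rows to the clients of zero demand yields a
   feasible assignment, and optimality gives the bound. *)

Lemma setmin_attained {R : realType} {X : finType} {A : {set X}} (g : X -> R)
    {a : X} :
  a \in A -> exists2 u, u \in A & setmin A g = g u.
Proof.
rewrite /setmin -mem_enum; case: (enum A) (mem_enum A) => [|a0 s] //= memA _.
suff [u us ->] : exists2 u, u \in a0 :: s &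
    foldr (fun u m => Num.min (g u) m) (g a0) s = g u.
  by exists u; rewrite // -memA.
elim: s {memA} => [|b s IH] /=; first by exists a0; rewrite ?inE.
have [u us ->] := IH.
case: (leP (g b) (g u)) => _.
  by exists b; rewrite // !inE eqxx orbT.
by exists u; move: us; rewrite !inE; case: (u == a0) => //= ->; rewrite orbT.
Qed.

Lemma sum_le_subset {R : numDomainType} {X : finType} {A B : {set X}}
    {g : X -> R} :
  A \subset B -> (forall u, u \in B -> 0 <= g u) ->
  \sum_(u in A) g u <= \sum_(u in B) g u.
Proof.
move=> /subsetP AB g_ge0; rewrite [leRHS](big_setID A) /= (setIidPr _).
  by rewrite lerDl sumr_ge0 // => u /setDP[/g_ge0].
exact/subsetP.
Qed.

Lemma sum_piecewise {R : numDomainType} {X : finType} {F A B : {set X}}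
    (g h : X -> R) :
  A \subset F -> B \subset F -> [disjoint A & B] ->
  \sum_(u in F) (if u \in A then g u else if u \in B then h u else 0) =
  \sum_(u in A) g u + \sum_(u in B) h u.
Proof.
move=> /subsetP AF /subsetP BF /pred0P dAB.
rewrite (big_mkcond (fun u => u \in A)) (big_mkcond (fun u => u \in B)).
rewrite -big_split big_mkcond; apply: eq_bigr => u _ /=.
have := dAB u; rewrite /=.
case uA: (u \in A); first by rewrite AF //= => ->; rewrite addr0.
move=> _; rewrite add0r; case uB: (u \in B); first by rewrite BF.
by case: (u \in F).
Qed.

Definition fractional_row {R : numDomainType} {X : finType} (F : {set X})
    (yb r : X -> R) : Prop :=
  (forall u, u \in F -> 0 <= r u /\ r u <= yb u) /\ \sum_(u in F) r u = 1.

(* Filling a unit of demand from two disjoint facility sets: use all of the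
   opening on [A] (of mass at most 1) and top up proportionally from [B]. *)
Lemma fill_from_two_sets {R : realFieldType} {X : finType} {F A B : {set X}}
    {yb c : X -> R} {K : R} :
  A \subset F -> B \subset F -> [disjoint A & B] ->
  (forall u, u \in F -> 0 <= yb u) -> (forall u, u \in B -> c u <= K) ->
  \sum_(u in A) yb u <= 1 -> 1 <= \sum_(u in A) yb u + \sum_(u in B) yb u ->
  exists2 r, fractional_row F yb r &
    \sum_(u in F) c u * r u <=
    \sum_(u in A) c u * yb u + K * (1 - \sum_(u in A) yb u).
Proof.
move=> AF BF dAB yb_ge0 c_leK sA_le1 sAB_ge1.
have /subsetP BF' := BF.
set sA := \sum_(u in A) yb u in sA_le1 sAB_ge1 *.
set sB := \sum_(u in B) yb u in sAB_ge1 *.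
have sB_ge0 : 0 <= sB by apply: sumr_ge0 => u /BF'/yb_ge0.
pose al := (1 - sA) / sB.
have al_sB : al * sB = 1 - sA.
  have [sB0|sB_neq0] := eqVneq sB 0; last by rewrite divfK.
  by rewrite sB0 mulr0; lra.
have al_ge0 : 0 <= al by apply: divr_ge0; lra.
have al_le1 : al <= 1.
  have [sB0|sB_gt0] := eqVneq sB 0; first by rewrite /al sB0 invr0 mulr0.
  by rewrite ler_pdivrMr ?lt_def ?sB_gt0 //; lra.
exists (fun u => if u \in A then yb u else if u \in B then al * yb u else 0).
  split; last by rewrite sum_piecewise // -mulr_sumr -/sA -/sB al_sB; lra.
  move=> u /yb_ge0 ybu; case: ifP => _; first by split.
  by case: ifP => _; split; nra.
rewrite (eq_bigr (fun u => if u \in A then c u * yb u else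
  if u \in B then c u * (al * yb u) else 0)); last first.
  by move=> u _; case: ifP => _ //; case: ifP => _ //; rewrite mulr0.
rewrite sum_piecewise // lerD2l.
apply: (@le_trans _ _ (\sum_(u in B) K * (al * yb u))).
  apply: ler_sum => u uB; apply: ler_wpM2r; last exact: c_leK.
  by apply: mulr_ge0 => //; apply/yb_ge0/BF'.
by rewrite -!mulr_sumr -/sB al_sB.
Qed.

Section ConsolidationRun.
Context {R : realType} {X : finType} {d : X -> X -> R} {thr : X -> R}.

Lemma consol_run_nonneg {pre rest} {w w' : X -> R} :
  consol_run d thr pre rest w w' ->
  (forall z, z \in pre ++ rest -> 0 <= w z) ->
  forall z, z \in pre ++ rest -> 0 <= w' z.
Proof.
elim=> {pre rest w w'} // [pre v rest w i w' ipre _ _ _ IH|pre v rest w w' _ _ IH]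
  w_ge0 z; rewrite -cat_rcons => /IH; apply=> z'; rewrite cat_rcons => z'in.
  rewrite /move_weight; case: ifP => // _; case: ifP => _; last exact: w_ge0.
  by apply: addr_ge0; apply: w_ge0; rewrite mem_cat ?ipre // inE eqxx orbT.
exact: w_ge0.
Qed.

(* A processed client whose weight has become nonpositive never receives
   weight again: weight is only moved onto clients of positive weight. *)
Lemma consol_run_zero {pre rest} {w w' : X -> R} :
  consol_run d thr pre rest w w' ->
  forall z, z \in pre -> w z <= 0 -> w' z <= 0.
Proof.
elim=> {pre rest w w'} // [pre v rest w i w' ipre _ wi _ IH|pre v rest w w' _ _ IH]
  z zin wz; apply: IH; rewrite ?mem_rcons ?inE ?zin ?orbT //.
rewrite /move_weight; case: ifP => // _; case: ifP => [/eqP ez|_] //.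
by move: wi; rewrite -ez ltNge wz.
Qed.

Lemma consol_run_sep {pre rest} {w w' : X -> R} (x0 : X) :
  consol_run d thr pre rest w w' ->
  forall i j, (i < j)%N -> (size pre <= j)%N -> (j < size (pre ++ rest))%N ->
  let s := pre ++ rest in
  0 < w' (nth x0 s i) -> 0 < w' (nth x0 s j) ->
  thr (nth x0 s j) < d (nth x0 s i) (nth x0 s j).
Proof.
elim=> {pre rest w w'}.
- by move=> pre w i j _ pre_j; rewrite cats0 => /(leq_ltn_trans pre_j); rewrite ltnn.
- move=> pre v rest w i0 w' ipre _ wi run IH i j ij pre_j j_s s wa wb.
  case: (ltngtP (size pre) j) => hj; last first.
  + move: wb; rewrite /s nth_cat -hj ltnn subnn /=.
    have := consol_run_zero run v; rewrite mem_rcons inE eqxx /move_weight eqxx.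
    by move=> /(_ isT (lexx 0)) v_le0 /(lt_le_trans)/(_ v_le0); rewrite ltxx.
  + by move: hj; rewrite ltnNge pre_j.
  + by move: wa wb; rewrite /s -cat_rcons; apply: IH; rewrite ?cat_rcons ?size_rcons.
- move=> pre v rest w w' stay run IH i j ij pre_j j_s s wa wb.
  case: (ltngtP (size pre) j) => hj; last first.
  + have ipre : (i < size pre)%N by rewrite hj.
    move: wa wb; rewrite /s !nth_cat ipre -hj ltnn subnn /= => wa wb.
    rewrite ltNge; apply/negP => /(stay _ (mem_nth x0 ipre)) wle.
    have := consol_run_zero run (nth x0 pre i).
    rewrite mem_rcons inE (mem_nth x0 ipre) orbT => /(_ isT wle).
    by rewrite leNgt wa.
  + by move: hj; rewrite ltnNge pre_j.
  + by move: wa wb; rewrite /s -cat_rcons; apply: IH; rewrite ?cat_rcons ?size_rcons.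
Qed.

End ConsolidationRun.

Lemma sorted_consol_run_separated (R : realType) (X : finType)
    (d : X -> X -> R) (rad : X -> R) (k : R) (s : seq X) (w w' : X -> R) :
  (forall a b, d a b = d b a) -> sorted (fun a b => rad a <= rad b) s ->
  consol_run d (fun v => k * rad v) [::] s w w' ->
  {in s &, forall a b, a != b -> 0 < w' a -> 0 < w' b ->
    k * Num.max (rad a) (rad b) < d a b}.
Proof.
move=> d_sym s_sorted run a b; wlog ab_lt : a b / (index a s < index b s)%N.
  move=> wlog_ab aS bS ab wa wb.
  case: (ltngtP (index a s) (index b s)) => ab_index; first exact: wlog_ab.
    by rewrite maxC d_sym; apply: wlog_ab; rewrite // eq_sym.
  by move: ab; rewrite -(nth_index a aS) ab_index nth_index ?eqxx.
move=> aS bS _ wa wb; have bs : (index b s < size s)%N by rewrite index_mem.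
have rad_ab : rad a <= rad b.
  have rad_trans : transitive (fun a b => rad a <= rad b) by move=> ? ? ?; apply: le_trans.
  have := sorted_leq_nth rad_trans (fun=> lexx _) a s_sorted.
  move=> /(_ (index a s) (index b s)); rewrite !inE nth_index ?nth_index //.
  by apply; rewrite ?index_mem // ltnW.
rewrite max_r //; have := consol_run_sep a run _ _ ab_lt (leq0n _) bs.
by rewrite /= !nth_index //; apply.
Qed.

Section Consolidation.
Context {R : realType} {X : finType} {p : R} {d : X -> X -> R}.
Context {P F : {set X}} {x : X -> X -> R} {w w' : X -> R}.
Hypothesis consol : consolidation p d P F x w w'.

Lemma consolidation_nonneg :
  (forall v, v \in P -> 0 <= w v) -> forall v, v \in P -> 0 <= w' v.
Proof.
have [s [_ <- _ run]] := consol => w_ge0 v; rewrite inE => vs.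
by apply: (consol_run_nonneg run) => // z zs; apply: w_ge0; rewrite inE.
Qed.

Lemma consolidation_separated :
  (forall a b, d a b = d b a) ->
  {in P &, forall a b, a != b -> 0 < w' a -> 0 < w' b ->
    2 `^ ((p + 1) / p) * Num.max (Rad p d F x a) (Rad p d F x b) < d a b}.
Proof.
have [s [_ <- s_sorted run]] := consol => d_sym a b; rewrite !inE => aS bS.
exact: sorted_consol_run_separated run a b aS bS.
Qed.

End Consolidation.

Lemma metric_ge0 {R : realType} {X : finType} {d : X -> X -> R} :
  is_metric d -> forall a b, 0 <= d a b.
Proof.
case=> d_refl _ d_sym d_tri a b; have := d_tri a b a.
rewrite d_refl (d_sym b a); lra.
Qed.

Section NearestClientCells.
Variables (R : realType) (X : finType) (d : X -> X -> R).
Variables (F C : {set X}) (near : X -> X) (rad : X -> R) (c : R).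
Hypothesis d_metric : is_metric d.
Hypothesis near_nearest :
  forall u, u \in F -> near u \in C /\ forall v, v \in C -> d u (near u) <= d u v.
Hypothesis c_ge0 : 0 <= c.
Hypothesis separated : forall a b, a \in C -> b \in C -> a != b ->
  2 * c * Num.max (rad a) (rad b) < d a b.

Definition cell v := [set u in F | near u == v].
Definition core v := [set u in cell v | d u v <= c * rad v].
Definition gap v := setmin (F :\: cell v) (fun u => d v u).
Definition ball v := [set u in cell v | d v u <= gap v].

Lemma ball_sub v : ball v \subset F.
Proof. by apply/subsetP => u; rewrite !inE => /andP[/andP[]]. Qed.

Lemma core_sub v : core v \subset F.
Proof. by apply/subsetP => u; rewrite !inE => /andP[/andP[]]. Qed.

Lemma ball_core_disjoint a b : a != b -> [disjoint ball a & core b].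
Proof.
move=> ab; rewrite -setI_eq0; apply/eqP/setP => u; rewrite !inE.
apply/negP => /andP[/andP[/andP[_ /eqP near_a] _] /andP[/andP[_ /eqP near_b] _]].
by rewrite -near_a -near_b eqxx in ab.
Qed.

(* Let [u*] realize [gap v] and [v'] be its
   nearest client.  Then [d v v' <= 2 gap v], so separation gives
   [c * rad < gap v] at both [v] and [v']; hence [core v] lies in [ball v],
   and the core of the (different) cell of [v'] lies within [3 gap v]. *)
Lemma neighbour_cell v : v \in C -> F :\: cell v != set0 ->
  exists2 v', v' \in C & [/\ v' != v, 0 <= gap v, core v \subset ball v &
    forall u, u \in core v' -> d v u <= 3 * gap v].
Proof.
move=> vC /set0Pn[u0 u0_out].
have [ust] := setmin_attained (fun u => d v u) u0_out.
rewrite !inE => /andP[ust_out ustF] gapE.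
have {}gapE : gap v = d v ust := gapE.
have nearNv : near ust != v by move: ust_out; rewrite ustF.
have [v'C v'_nearest] := near_nearest ust ustF.
have [_ _ d_sym d_tri] := d_metric.
have d_ust_v' : d ust (near ust) <= gap v by rewrite gapE (d_sym v); apply: v'_nearest.
have d_v_v' : d v (near ust) <= 2 * gap v.
  by apply: le_trans (d_tri v ust _) _; rewrite gapE in d_ust_v' *; lra.
have [rad_v rad_v'] : c * rad v < gap v /\ c * rad (near ust) < gap v.
  have := separated _ _ vC v'C; rewrite eq_sym nearNv => /(_ isT) sep.
  have := le_max (rad v) (rad v) (rad (near ust)).
  have := le_max (rad (near ust)) (rad v) (rad (near ust)).
  rewrite !lexx orbT => /(ler_wpM2l c_ge0) h1 /(ler_wpM2l c_ge0) h2.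
  by split; nra.
exists (near ust) => //; split => //.
- by rewrite gapE; apply: metric_ge0.
- apply/subsetP => u; rewrite !inE => /andP[-> d_uv] /=.
  by rewrite d_sym; apply: le_trans d_uv (ltW rad_v).
- move=> u; rewrite !inE => /andP[_ d_uv'].
  have := d_tri ust (near ust) u; have := d_tri v ust u.
  rewrite (d_sym (near ust) u) -gapE; lra.
Qed.

Lemma client_row (p : R) (yb : X -> R) v :
  0 <= p -> (forall u, u \in F -> 0 <= yb u) ->
  (forall v, v \in C ->
     1 / 2 <= \sum_(u in core v) yb u /\ \sum_(u in ball v) yb u <= 1) ->
  (2 <= #|C|)%N -> v \in C ->
  exists2 r, fractional_row F yb r &
    \sum_(u in F) d v u `^ p * r u <=
    \sum_(u in ball v) d v u `^ p * yb u +
    3 `^ p * gap v `^ p * (1 - \sum_(u in ball v) yb u).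
Proof.
move=> p_ge0 yb_ge0 yb_C C_ge2 vC.
have [v2 v2C v2v] : exists2 v2, v2 \in C & v2 != v.
  have /card_gt0P[v2] : (0 < #|C :\ v|)%N by rewrite (cardsD1 v) vC in C_ge2.
  by rewrite !inE => /andP[]; exists v2.
have outside : F :\: cell v != set0.
  apply/set0Pn; have /set0Pn[u2 u2_core] : core v2 != set0.
    apply: contraTneq (yb_C v2 v2C).1 => ->; rewrite big_set0; lra.
  by exists u2; move: u2_core; rewrite !inE => /andP[/andP[-> /eqP ->]]; rewrite v2v.
have [v' v'C [v'v gap_ge0 core_ball core_near]] := neighbour_cell v vC outside.
have [sum_core sum_ball] := yb_C v vC.
apply: (fill_from_two_sets (ball_sub v) (core_sub v') _ yb_ge0 _ sum_ball).
- by apply: ball_core_disjoint; rewrite eq_sym.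
- move=> u /core_near d_vu; rewrite -powRM ?ler0n //.
  apply: ge0_ler_powR => //; rewrite ?nnegrE ?mulr_ge0 ?ler0n //.
  by have := metric_ge0 d_metric v u.
- have := sum_le_subset core_ball (fun u uF => yb_ge0 u (subsetP (ball_sub v) u uF)).
  have := (yb_C v' v'C).1; lra.
Qed.

End NearestClientCells.
Arguments client_row {R X d F C near rad c}.

Lemma optimal_conn_cost_bound {R : realType} {X : finType} (p : R)
    (d : X -> X -> R) (P F : {set X}) (om yb bound : X -> R) :
  (forall v, v \in P -> 0 <= om v) ->
  let P' := [set v in P | om v != 0] in
  P' != set0 ->
  (forall v, v \in P' -> exists2 r, fractional_row F yb r &
     \sum_(u in F) d v u `^ p * r u <= bound v) ->
  (exists xb, feasible_assignment P F yb xb) /\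
  (forall xb, optimal_assignment p d P F om yb xb ->
     conn_cost p d P F om xb <= \sum_(v in P') om v * bound v).
Proof.
move=> om_ge0 P' /set0Pn[v0 v0P'] rows.
have /choice[row rowP] : forall v, exists r, v \in P' ->
    fractional_row F yb r /\ \sum_(u in F) d v u `^ p * r u <= bound v.
  move=> v; case vP': (v \in P'); last by exists (fun=> 0).
  by have [r r_row r_cost] := rows v vP'; exists r.
pose xb0 v := row (if v \in P' then v else v0).
have xb0_row v : fractional_row F yb (xb0 v).
  by rewrite /xb0; case: ifP => [/rowP|_]; [case | case: (rowP v0 v0P')].
have feas : feasible_assignment P F yb xb0.
  by split=> [v _ | v u _ /(xb0_row v).1 //]; rewrite (xb0_row v).2.
split=> [|xb [_ /(_ xb0 feas) xb_opt]]; first by exists xb0.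
apply: le_trans xb_opt _; rewrite /conn_cost (bigID (fun v => om v != 0)) /=.
rewrite [X in _ + X]big1 ?addr0 => [|v /andP[_ /negPn/eqP ->]]; last first.
  by rewrite big1 // => u _; rewrite !mul0r.
rewrite (eq_bigl (fun v => v \in P')) => [|v]; last by rewrite inE.
apply: ler_sum => v vP'; have vP : v \in P by move: vP'; rewrite inE => /andP[].
rewrite /xb0 vP'; under eq_bigr do rewrite -mulrA.
rewrite -mulr_sumr ler_wpM2l ?om_ge0 //; exact: (rowP v vP').2.
Qed.

Lemma consolidation_threshold {R : realType} (p : R) :
  0 < p -> 2 `^ ((p + 1) / p) = 2 * 2 `^ p^-1.
Proof.
move=> p_gt0; rewrite mulrDl divff ?gt_eqF // mul1r powRD ?powRr1 ?ler0n //.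
by apply/implyP => _; rewrite pnatr_eq0.
Qed.

Theorem mainTheorem14 (R : realType) (X : finType) (p : R)
  (d : X -> X -> R) (P F : {set X}) (f w : X -> R)
  (indep : {set X} -> bool) (x : X -> X -> R) (y : X -> R)
  (w' : X -> R) (near : X -> X) :
  1 <= p ->
  is_metric d ->
  P :|: F = [set: X] ->
  (forall u, u \in F -> 0 <= f u) ->
  (forall v, v \in P -> 0 <= w v) ->
  matroid F indep ->
  lp_optimal p d P F f indep w x y ->
  (forall v, v \in P -> \sum_(u in F) x v u = 1) ->
  consolidation p d P F x w w' ->
  let P' := [set v in P | w' v != 0] in
  (2 <= #|P'|)%N ->
  (* F(v): facilities whose nearest client in P' is v (any tie-breaking) *)
  (forall u, u \in F -> near u \in P' /\ forall v, v \in P' -> d u (near u) <= d u v) ->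
  let Fv := fun v => [set u in F | near u == v] in
  let Fv' := fun v => [set u in Fv v | d u v <= 2 `^ (p^-1) * Rad p d F x v] in
  let gam := fun v => setmin (F :\: Fv v) (fun u => d v u) in
  let G := fun v => [set u in Fv v | d v u <= gam v] in
  let T := fun yb : X -> R =>
    \sum_(u in F) f u * yb u +
    \sum_(v in P') w' v * (\sum_(u in G v) (d v u `^ p) * yb u +
                          (3 `^ p) * (gam v `^ p) * (1 - \sum_(u in G v) yb u)) in
  forall yb : X -> R,
    (forall u, u \in F -> 0 <= yb u) ->
    (forall S : {set X}, S \subset F -> \sum_(u in S) yb u <= (rank indep S)%:R) ->
    (forall v, v \in P' -> 1 / 2 <= \sum_(u in Fv' v) yb u /\ \sum_(u in G v) yb u <= 1) ->
    (exists xb, feasible_assignment P F yb xb) /\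
    (forall xb, optimal_assignment p d P F w' yb xb ->
       cost p d P F f w' xb yb <= T yb).
Proof.
move=> p_ge1 d_metric _ _ w_ge0 _ _ _ consol P' P'_ge2 near_spec Fv Fv' gam G T
  yb yb_ge0 _ yb_P'.
have p_gt0 : 0 < p by apply: lt_le_trans p_ge1.
have [_ _ d_sym _] := d_metric.
have w'_ge0 := consolidation_nonneg consol w_ge0.
have separated a b : a \in P' -> b \in P' -> a != b ->
    2 * 2 `^ p^-1 * Num.max (Rad p d F x a) (Rad p d F x b) < d a b.
  rewrite !inE => /andP[aP w'a] /andP[bP w'b] ab.
  rewrite -consolidation_threshold //.
  by apply: (consolidation_separated consol d_sym a b aP bP ab);
    rewrite lt_def ?w'a ?w'b w'_ge0.
pose bound v := \sum_(u in G v) (d v u `^ p) * yb u +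
  (3 `^ p) * (gam v `^ p) * (1 - \sum_(u in G v) yb u).
have rows v : v \in P' ->
    exists2 r, fractional_row F yb r & \sum_(u in F) d v u `^ p * r u <= bound v.
  have c_ge0 : 0 <= 2 `^ p^-1 :> R by rewrite powR_ge0.
  exact: (client_row d_metric near_spec c_ge0 separated p yb v (ltW p_gt0)
    yb_ge0 yb_P' P'_ge2).
have P'_nonempty : P' != set0 by rewrite -card_gt0; apply: leq_trans P'_ge2.
have [feas conn_bound] :=
  optimal_conn_cost_bound p d P F w' yb bound w'_ge0 P'_nonempty rows.
split=> // xb /conn_bound; rewrite /cost /T lerD2l; exact.
Qed.
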